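(* For any finite metric spaces $(X,d_X)$ and $(Y,d_Y)$, \[d_{\mathrm{B}}\left(\mathrm{dgm}_0(\mathcal{R}_\bullet(X,d_X)),\mathrm{dgm}_0(\mathcal{R}_\bullet(Y,d_Y))\right)\le d_{\mathrm{I}}\left(\beta_0^{(X,d_X)},\beta_0^{(Y,d_Y)}\right).\]
   Context: For a finite metric space $(X,d_X)$ and $\delta\in\mathbf{R}$, the Rips complex $\mathcal{R}_\delta(X,d_X)$ is the simplicial complex on $X$ whose simplices are the nonempty $\sigma\subseteq X$ with $d_X(x,x')\le\delta$ for all $x,x'\in\sigma$; $\mathcal{R}_\bullet(X,d_X)$ is the filtration $\delta\mapsto\mathcal{R}_\delta(X,d_X)$ with inclusions. $\mathrm{dgm}_0(\mathcal{R}_\bullet(X,d_X))$ is the persistence diagram (multiset of birth–death pairs $(b,d)$ with $b\le d$, $d$ possibly $+\infty$) of the persistence module $\delta\mapsto\mathrm{H}_0(\mathcal{R}_\delta(X,d_X))$ over a fixed field. The bottleneck distance between multisets $X_1,X_2$ of points of $\{(u_1,u_2)\in(\mathbf{R}\cup\{\pm\infty\})^2:u_1\le u_2\}$: a partial injection $\alpha:X_1\nrightarrow X_2$ is an $\varepsilon$-matching if $\|\mathbf{u}-\alpha(\mathbf{u})\|_\infty\le\varepsilon$ for matched $\mathbf{u}$ and $u_2-u_1\le2\varepsilon$ for every unmatched $\mathbf{u}=(u_1,u_2)$ in $X_1$ or $X_2$; $d_{\mathrm{B}}(X_1,X_2)$ is the infimum of $\varepsilon$ admitting an $\varepsilon$-matching.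 The Betti-0 function $\beta_0^{(X,d_X)}:\mathbf{R}_+\to\mathbf{Z}_+$ is $\delta\mapsto\dim\mathrm{H}_0(\mathcal{R}_\delta(X,d_X))$. For functions $F,G:\mathbf{R}_+\to\mathbf{Z}_+$, $d_{\mathrm{I}}(F,G):=\inf\{\varepsilon\ge0:\forall\delta\in\mathbf{R}_+,\ F(\delta)\ge G(\delta+\varepsilon),\ G(\delta)\ge F(\delta+\varepsilon)\}$. *)

From HB Require Import structures.
From mathcomp Require Import all_boot all_order all_algebra.
From mathcomp Require Import all_classical all_reals.
From mathcomp Require Import ereal.

Set Implicit Arguments.
Unset Strict Implicit.
Unset Printing Implicit Defensive.

Import Order.TTheory GRing.Theory Num.Theory.
Local Open Scope ring_scope.
Local Open Scope classical_set_scope.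

Section Defs.
Variable R : realType.

Definition is_metric (T : finType) (d : T -> T -> R) : Prop :=
  [/\ (forall x y, d x y = 0 <-> x = y),
      (forall x y, d x y = d y x) &
      (forall x y z, d x z <= d x y + d y z)].

(* H_0 of the Rips complex R_delta(X,d) over a field F, written out from    *)
(* its chain groups:  C_0 = span of the 0-simplices {x} (d x x <= delta),   *)
(* B_0 = image of the boundary of the 1-simplices {x,y} (d x y <= delta),   *)
(* spanned by e_x - e_y.  Vectors of F^X are row vectors indexed by         *)
(* 'I_#|T| via enum_rank / enum_val.                                        *)
Variables (F : fieldType) (T : finType) (d : T -> T -> R).

Definition rips_vertex (delta : R) (x : T) : bool := d x x <= delta.
Definition rips_edge (delta : R) (x y : T) : bool := (x != y) && (d x y <= delta).

(* rows: the 0-simplices of R_delta (zero rows for non-simplices) *)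
Definition C0mx (delta : R) : 'M[F]_(#|T|, #|T|) :=
  \matrix_(i < #|T|, j < #|T|)
     (if rips_vertex delta (enum_val i) && (i == j) then 1 else 0).

(* rows: boundaries of the 1-simplices of R_delta (ordered pairs) *)
Definition B0mx (delta : R) : 'M[F]_(#|{: T * T}|, #|T|) :=
  \matrix_(k < #|{: T * T}|, j < #|T|)
     (let p := enum_val k in
      if rips_edge delta p.1 p.2
      then (j == enum_rank p.1)%:R - (j == enum_rank p.2)%:R
      else 0).

Definition H0dim (delta : R) : nat := (\rank (C0mx delta) - \rank (B0mx delta))%N.

(* rank of the map H_0(R_s) -> H_0(R_t) (s <= t) induced by inclusion:     *)
(* dim ((C_0(R_s) + B_0(R_t)) / B_0(R_t)).                                   *)
Definition H0rank (s t : R) : nat :=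
  (\rank (C0mx s + B0mx t)%MS - \rank (B0mx t))%N.

(* Betti-0 function delta |-> dim H_0(R_delta)  (only used on R_+) *)
Definition betti0 (delta : R) : nat := H0dim delta.

(* Persistence diagrams: finite multisets (sequences) of points (b, d) of   *)
(* the extended plane.  D is the 0-th persistence diagram of the Rips       *)
(* filtration iff the module delta |-> H_0(R_delta) decomposes as the       *)
(* direct sum of interval modules F[b,d) for (b,d) in D, which (for a       *)
(* pointwise finite-dimensional module) is equivalent to the rank invariant *)
(* identity below; each interval is nonempty (b < d).                       *)
Definition is_dgm0 (D : seq (\bar R * \bar R)) : Prop :=
  all (fun p => (p.1 < p.2)%E) D /\
  forall s t : R, s <= t ->
    H0rank s t = count (fun p => (p.1 <= s%:E)%E && (t%:E < p.2)%E) D.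

End Defs.

Section Bottleneck.
Variable R : realType.

(* |a - b| on extended reals, with |+oo - +oo| = |-oo - -oo| = 0 *)
Definition edist (a b : \bar R) : \bar R :=
  match a, b with
  | EFin x, EFin y => `|x - y|%:E
  | _, _ => if a == b then 0%E else +oo%E
  end.

Definition linf (u v : \bar R * \bar R) : \bar R :=
  Order.max (edist u.1 v.1) (edist u.2 v.2).

Definition near_diag (eps : R) (u : \bar R * \bar R) : bool :=
  (u.2 <= u.1 + (2 * eps)%:E)%E.

Definition pt0 : \bar R * \bar R := (0%E, 0%E).

Definition is_eps_matching (eps : R) (X1 X2 : seq (\bar R * \bar R))
  (alpha : 'I_(size X1) -> option 'I_(size X2)) : Prop :=
  [/\ (forall i j k, alpha i = Some k -> alpha j = Some k -> i = j),
      (forall i k, alpha i = Some k ->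
          (linf (nth pt0 X1 i) (nth pt0 X2 k) <= eps%:E)%E),
      (forall i, alpha i = None -> near_diag eps (nth pt0 X1 i)) &
      (forall k : 'I_(size X2), (forall i, alpha i <> Some k) ->
          near_diag eps (nth pt0 X2 k))].
Arguments is_eps_matching : clear implicits.

Definition dB (X1 X2 : seq (\bar R * \bar R)) : \bar R :=
  ereal_inf [set e%:E | e in [set e : R | 0 <= e /\
     exists alpha, is_eps_matching e X1 X2 alpha]].

Definition dI (f g : R -> nat) : \bar R :=
  ereal_inf [set e%:E | e in [set e : R | 0 <= e /\
     forall delta : R, 0 <= delta ->
       (g (delta + e)%R <= f delta)%N /\ (f (delta + e)%R <= g delta)%N]].

End Bottleneck.

From mathcomp Require Import all_boot all_order all_algebra.
From mathcomp Require Import all_classical all_reals.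
From mathcomp Require Import ereal.
From mathcomp Require Import lra.

(* In a metric space every vertex of the Rips complex is present from time 0
   on, so every bar of dgm_0 has the form [0, b) and the diagram is determined
   by the counting function t |-> #{bars with b > t}, which is beta_0(t).
   An e-interleaving of the Betti functions shifts these counting functions
   by e.  Matching the bars of the two diagrams in decreasing order of death
   then moves every death by at most e, and every unmatched bar dies by e. *)

Set Implicit Arguments.
Unset Strict Implicit.
Unset Printing Implicit Defensive.

Import Order.TTheory GRing.Theory Num.Theory.
Local Open Scope ring_scope.

Section RipsH0.
Variables (R : realType) (F : fieldType) (T : finType) (d : T -> T -> R).
Hypothesis d_refl : forall x, d x x = 0.

Lemma C0mx_ge0 t : 0 <= t -> C0mx F d t = 1%:M.
Proof.
move=> t_ge0; apply/matrixP => i j.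
by rewrite !mxE /rips_vertex d_refl t_ge0; case: (i == j).
Qed.

Lemma C0mx_lt0 t : t < 0 -> C0mx F d t = 0.
Proof.
move=> t_lt0; apply/matrixP => i j.
by rewrite !mxE /rips_vertex d_refl leNgt t_lt0.
Qed.

Lemma H0rank_ge0 s t : 0 <= s -> 0 <= t -> H0rank F d s t = betti0 F d t.
Proof.
move=> s_ge0 t_ge0; rewrite /H0rank /betti0 /H0dim.
rewrite (C0mx_ge0 s_ge0) (C0mx_ge0 t_ge0) mxrank1.
by have /eqP -> : row_full (1%:M + B0mx F d t)%MS by rewrite -sub1mx addsmxSl.
Qed.

Lemma H0rank_lt0 s t : s < 0 -> H0rank F d s t = 0%N.
Proof. by move=> s_lt0; rewrite /H0rank (C0mx_lt0 s_lt0) adds0mx subnn. Qed.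

End RipsH0.

Lemma count_lt_subpred (T : Type) (a1 a2 : pred T) (s : seq T) :
  subpred a1 a2 -> has (predD a2 a1) s -> (count a1 s < count a2 s)%N.
Proof.
move=> sub12; rewrite has_count => diff_gt0.
have -> : count a2 s = (count a1 s + count (predD a2 a1) s)%N.
  rewrite -count_predUI (@eq_count _ (predI _ _) pred0) ?count_pred0 ?addn0.
    by apply: eq_count => x /=; case: (boolP (a1 x)) => [/sub12 ->|].
  by move=> x /=; case: (a1 x); rewrite ?andbF.
by rewrite -addn1 leq_add2l.
Qed.

Definition bar_alive (R : realType) (s t : R) (p : \bar R * \bar R) : bool :=
  (p.1 <= s%:E)%E && (t%:E < p.2)%E.

Section Dgm0.
Variables (R : realType) (F : fieldType) (T : finType) (d : T -> T -> R).
Hypothesis d_refl : forall x, d x x = 0.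
Variable D : seq (\bar R * \bar R).
Hypothesis dgmD : is_dgm0 F d D.

Lemma count_bar_alive s t : s <= t -> H0rank F d s t = count (bar_alive s t) D.
Proof. by case: dgmD => _; apply. Qed.

Lemma dgm0_not_alive_lt0 s p : s < 0 -> p \in D -> ~~ bar_alive s s p.
Proof.
move=> s_lt0 pD; apply/negP => alive_p.
have := count_bar_alive (lexx s); rewrite H0rank_lt0 // => /esym/eqP.
by rewrite -leqn0 leqNgt -has_count; apply/negP/negPn/hasP; exists p.
Qed.

Lemma dgm0_birth_not_gt0 r p : 0 < r -> p \in D -> p.1 <> r%:E.
Proof.
move=> r_gt0 pD p1E.
have [/allP lt12 _] := dgmD.
have := count_bar_alive (ltW r_gt0); have := count_bar_alive (lexx r).
rewrite !(H0rank_ge0 F d_refl) ?(ltW r_gt0) // => -> /eqP; apply/negP.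
rewrite neq_ltn; apply/orP; right; apply: count_lt_subpred.
  by move=> q /andP[q1 q2]; rewrite /bar_alive q2 (le_trans q1) // lee_fin ltW.
apply/hasP; exists p => //=.
by rewrite /bar_alive -p1E (lt12 p pD) lexx andbT p1E /= lee_fin -ltNge r_gt0.
Qed.

Lemma dgm0_birth0 p : p \in D -> p.1 = 0%E.
Proof.
move=> pD; have [/allP /(_ p pD) + _] := dgmD.
case: p pD => [[r| |] b] pD /= lt12.
- case: (ltgtP r 0) => [r_lt0|r_gt0|-> //].
    by have /negP[] := dgm0_not_alive_lt0 r_lt0 pD; rewrite /bar_alive /= lexx.
  by have := dgm0_birth_not_gt0 r_gt0 pD.
- by have := lt_le_trans lt12 (leey b); rewrite ltxx.
- have [s s_lt0 s_lt_b] : exists2 s : R, s < 0 & (s%:E < b)%E.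
    case: b lt12 {pD} => [y| |] // _; last by exists (-1); rewrite ?ltrN10 ?ltry.
    exists (Num.min (-1) (y - 1)); first by rewrite gt_min ltrN10.
    by rewrite lte_fin gt_min gtrDl ltrN10 orbT.
  by have /negP[] := dgm0_not_alive_lt0 s_lt0 pD; rewrite /bar_alive leNye.
Qed.

Lemma dgm0_death_gt0 p : p \in D -> (0 < p.2)%E.
Proof.
by move=> pD; have [/allP lt12 _] := dgmD; rewrite -(dgm0_birth0 pD) lt12.
Qed.

Lemma count_death_gt t : 0 <= t ->
  count (fun p => t%:E < p.2)%E D = betti0 F d t.
Proof.
move=> t_ge0; rewrite -(H0rank_ge0 F d_refl t_ge0 t_ge0) count_bar_alive //.
by apply: eq_in_count => p pD; rewrite /bar_alive dgm0_birth0 // lee_fin t_ge0.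
Qed.

End Dgm0.

Section DescendingRank.
Context {disp : Order.disp_t} {V : orderType disp} {n : nat} (a : 'I_n -> V).

Definition precedes (j i : 'I_n) : bool :=
  (a i < a j)%O || ((a j == a i) && (j < i)%N).

Definition rank_desc (i : 'I_n) : nat := #|[set j | precedes j i]|.

Definition count_gt (t : V) : nat := #|[set j | (t < a j)%O]|.

Lemma precedes_irr i : ~~ precedes i i.
Proof. by rewrite /precedes ltxx ltnn andbF. Qed.

Lemma precedes_trans i j k : precedes i j -> precedes j k -> precedes i k.
Proof.
rewrite /precedes => /orP[lt_ji|/andP[/eqP eq_ij lt_ij]].
  case/orP=> [lt_kj|/andP[/eqP <- _]]; last by rewrite lt_ji.
  by rewrite (lt_trans lt_kj lt_ji).
case/orP=> [lt_kj|/andP[/eqP eq_jk lt_jk]]; first by rewrite eq_ij lt_kj.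
by rewrite eq_ij eq_jk eqxx (ltn_trans lt_ij lt_jk) orbT.
Qed.

Lemma precedes_total i j : i != j -> precedes i j || precedes j i.
Proof.
move=> neq_ij; rewrite /precedes.
case: (ltgtP (a i) (a j)) => _; rewrite ?orbT //=.
by case: (ltngtP i j) => // /val_inj eq_ij; rewrite eq_ij eqxx in neq_ij.
Qed.

Lemma rank_desc_lt i j : precedes j i -> (rank_desc j < rank_desc i)%N.
Proof.
move=> ji; apply: proper_card; apply/properP; split.
  by apply/fintype.subsetP => k; rewrite !inE => kj; apply: precedes_trans kj ji.
by exists j; rewrite !inE ?ji // (negbTE (precedes_irr j)).
Qed.

Lemma rank_desc_inj : injective rank_desc.
Proof.
move=> i j eq_ij; apply/eqP/negPn/negP => /precedes_total/orP[] /rank_desc_lt.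
  by rewrite eq_ij ltnn.
by rewrite eq_ij ltnn.
Qed.

Lemma rank_desc_ltn i : (rank_desc i < n)%N.
Proof.
rewrite -[n]card_ord; apply: proper_card; apply/properP; split.
  exact/fintype.subsetP.
by exists i => //; rewrite inE (negbTE (precedes_irr i)).
Qed.

Lemma rank_desc_onto q : (q < n)%N -> exists i, rank_desc i = q.
Proof.
move=> q_lt_n.
have inj : injective (fun i => Ordinal (rank_desc_ltn i)).
  by move=> i j /(congr1 val) /rank_desc_inj.
have [g _ gK] := injF_bij inj.
by exists (g (Ordinal q_lt_n)); have := congr1 val (gK (Ordinal q_lt_n)).
Qed.

Lemma lt_rank_desc t i : (t < a i)%O = (rank_desc i < count_gt t)%N.
Proof.
apply/idP/idP => [t_lt|].
  apply: proper_card; apply/properP; split.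
    apply/fintype.subsetP => k; rewrite !inE /precedes.
    by case/orP=> [lt_ik|/andP[/eqP-> _]] //; apply: lt_trans lt_ik.
  by exists i; rewrite !inE ?t_lt // (negbTE (precedes_irr i)).
apply: contraLR; rewrite -leNgt -leqNgt => le_t.
apply: subset_leq_card; apply/fintype.subsetP => k; rewrite !inE => t_lt.
by rewrite /precedes (le_lt_trans le_t t_lt).
Qed.

Lemma le_of_rank_desc_ge t m i :
  (m <= rank_desc i)%N -> (count_gt t <= m)%N -> (a i <= t)%O.
Proof.
move=> le_m le_cnt; rewrite leNgt lt_rank_desc -leqNgt.
exact: leq_trans le_cnt le_m.
Qed.

End DescendingRank.

Lemma lt_of_rank_desc_eq {disp : Order.disp_t} {V : orderType disp} {m n : nat}
    (a : 'I_m -> V) (b : 'I_n -> V) i k t u :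
  rank_desc a i = rank_desc b k -> (count_gt b u <= count_gt a t)%N ->
  (u < b k)%O -> (t < a i)%O.
Proof.
by rewrite !lt_rank_desc => -> le_cnt lt_u; apply: leq_trans lt_u le_cnt.
Qed.

Lemma count_card_nth (T : eqType) (P : pred T) (s : seq T) x0 :
  count P s = #|[set j : 'I_(size s) | P (nth x0 s j)]|.
Proof.
rewrite -[in LHS](mkseq_nth x0 s) /mkseq count_map -val_enum_ord count_map.
rewrite cardE /enum_mem size_filter -enumT /=.
by elim: (enum _) => //= j t ->; rewrite !inE.
Qed.

Lemma edist_le_of_shift (R : realType) (e : R) (a b : \bar R) :
  0 <= e -> (0 < a)%E -> (0 < b)%E ->
  (forall t : R, 0 <= t -> ((t + e)%:E < b)%E -> (t%:E < a)%E) ->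
  (forall t : R, 0 <= t -> ((t + e)%:E < a)%E -> (t%:E < b)%E) ->
  (edist a b <= e%:E)%E.
Proof.
move=> e_ge0 + + ab ba.
case: a ab ba => [x| |] ab ba; case: b ab ba => [y| |] ab ba //=;
  rewrite ?lte_fin => x_gt0 y_gt0.
- have not_yx : ~~ (y + e < x).
    by apply/negP => /(ba y (ltW y_gt0)); rewrite ltxx.
  have not_xy : ~~ (x + e < y).
    by apply/negP => /(ab x (ltW x_gt0)); rewrite ltxx.
  by rewrite lee_fin ler_norml; move: not_yx not_xy; rewrite -!leNgt; lra.
- by have := ab x (ltW x_gt0) (ltry _); rewrite ltxx.
- by have := ba y (ltW y_gt0) (ltry _); rewrite ltxx.
Qed.

Lemma near_diag_birth0 (R : realType) (e : R) (p : \bar R * \bar R) :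
  0 <= e -> p.1 = 0%E -> (p.2 <= e%:E)%E -> near_diag e p.
Proof.
move=> e_ge0 p1_0 le_e; rewrite /near_diag p1_0 add0e (le_trans le_e) //.
by rewrite lee_fin ler_peMl // ler1n.
Qed.

Definition death (R : realType) (D : seq (\bar R * \bar R)) (j : 'I_(size D)) :
  \bar R := (nth (pt0 R) D j).2.
Arguments death {R} D j.

Lemma count_gt_death (R : realType) (D : seq (\bar R * \bar R)) t :
  count_gt (death D) t = count (fun p => t < p.2)%E D.
Proof. by rewrite (count_card_nth _ _ (pt0 R)). Qed.

Section RankMatching.
Variables (R : realType) (DX DY : seq (\bar R * \bar R)).

Local Notation rX := (rank_desc (death DX)).
Local Notation rY := (rank_desc (death DY)).

Definition rank_match (i : 'I_(size DX)) : option 'I_(size DY) :=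
  [pick k | rY k == rX i].

Lemma rank_match_rank i k : rank_match i = Some k -> rY k = rX i.
Proof. by rewrite /rank_match; case: pickP => // k' /eqP eq_r [<-]. Qed.

Lemma rank_match_inj i j k :
  rank_match i = Some k -> rank_match j = Some k -> i = j.
Proof.
move=> /rank_match_rank eq_i /rank_match_rank eq_j.
exact: rank_desc_inj (etrans (esym eq_i) eq_j).
Qed.

Lemma rank_match_None i : rank_match i = None -> (size DY <= rX i)%N.
Proof.
rewrite /rank_match; case: pickP => // no_k _; rewrite leqNgt.
apply/negP => /(rank_desc_onto (death DY))[k eq_k].
by have := no_k k; rewrite eq_k eqxx.
Qed.

Lemma rank_match_unhit k :
  (forall i, rank_match i <> Some k) -> (size DX <= rY k)%N.
Proof.
move=> unhit; rewrite leqNgt.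
apply/negP => /(rank_desc_onto (death DX))[i eq_i].
apply: (unhit i); rewrite /rank_match; case: pickP => [k' /eqP eq_k'|/(_ k)].
  by congr Some; apply: (@rank_desc_inj _ _ _ (death DY)); rewrite eq_k' eq_i.
by rewrite eq_i eqxx.
Qed.

Variable e : R.
Hypothesis e_ge0 : 0 <= e.
Hypothesis birthX : {in DX, forall p, p.1 = 0%E}.
Hypothesis birthY : {in DY, forall p, p.1 = 0%E}.
Hypothesis deathX : {in DX, forall p, (0 < p.2)%E}.
Hypothesis deathY : {in DY, forall p, (0 < p.2)%E}.
Hypothesis shiftXY : forall t : R, 0 <= t ->
  (count (fun p => (t + e)%:E < p.2)%E DY
     <= count (fun p => t%:E < p.2)%E DX)%N.
Hypothesis shiftYX : forall t : R, 0 <= t ->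
  (count (fun p => (t + e)%:E < p.2)%E DX
     <= count (fun p => t%:E < p.2)%E DY)%N.

Lemma rank_match_close i k : rank_match i = Some k ->
  (linf (nth (pt0 R) DX i) (nth (pt0 R) DY k) <= e%:E)%E.
Proof.
move=> /rank_match_rank eq_r.
have DXi : nth (pt0 R) DX i \in DX := mem_nth _ (ltn_ord i).
have DYk : nth (pt0 R) DY k \in DY := mem_nth _ (ltn_ord k).
rewrite /linf (birthX DXi) (birthY DYk) /= ge_max subr0 normr0 lee_fin e_ge0.
apply: edist_le_of_shift; [by [] | exact: deathX | exact: deathY | |].
  move=> t t_ge0; apply: (lt_of_rank_desc_eq (esym eq_r)).
  by rewrite !count_gt_death shiftXY.
move=> t t_ge0; apply: (lt_of_rank_desc_eq eq_r).
by rewrite !count_gt_death shiftYX.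
Qed.

Lemma rank_match_None_near_diag i :
  rank_match i = None -> near_diag e (nth (pt0 R) DX i).
Proof.
move=> /rank_match_None ge_r.
apply: near_diag_birth0 e_ge0 (birthX (mem_nth _ (ltn_ord i))) _.
apply: (le_of_rank_desc_ge ge_r); rewrite count_gt_death -[e]add0r.
exact: leq_trans (shiftYX (lexx 0)) (count_size _ _).
Qed.

Lemma rank_match_unhit_near_diag k :
  (forall i, rank_match i <> Some k) -> near_diag e (nth (pt0 R) DY k).
Proof.
move=> /rank_match_unhit ge_r.
apply: near_diag_birth0 e_ge0 (birthY (mem_nth _ (ltn_ord k))) _.
apply: (le_of_rank_desc_ge ge_r); rewrite count_gt_death -[e]add0r.
exact: leq_trans (shiftXY (lexx 0)) (count_size _ _).
Qed.

Lemma rank_match_eps_matching : is_eps_matching e rank_match.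
Proof.
split; [exact: rank_match_inj | exact: rank_match_close |
        exact: rank_match_None_near_diag | exact: rank_match_unhit_near_diag].
Qed.

Lemma dB_le_of_count_shift : (dB DX DY <= e%:E)%E.
Proof.
by apply: ereal_inf_lbound; exists e => //; split; last exists rank_match;
  [|exact: rank_match_eps_matching].
Qed.

End RankMatching.

Theorem theorem4p14 (R : realType) (F : fieldType)
  (X : finType) (dX : X -> X -> R) (Y : finType) (dY : Y -> Y -> R)
  (DX DY : seq (\bar R * \bar R)) :
  is_metric dX -> is_metric dY ->
  is_dgm0 F dX DX -> is_dgm0 F dY DY ->
  (dB DX DY <= dI (betti0 F dX) (betti0 F dY))%E.
Proof.
move=> [dX0 _ _] [dY0 _ _] dgmX dgmY.
have dX_refl x : dX x x = 0 by apply/dX0.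
have dY_refl y : dY y y = 0 by apply/dY0.
apply: le_ereal_inf_tmp => _ [e [e_ge0 interleaved] <-].
apply: dB_le_of_count_shift => //.
- exact: dgm0_birth0 dgmX.
- exact: dgm0_birth0 dgmY.
- exact: dgm0_death_gt0 dgmX.
- exact: dgm0_death_gt0 dgmY.
- move=> t t_ge0; have te_ge0 : 0 <= t + e by rewrite addr_ge0.
  rewrite (count_death_gt dY_refl dgmY te_ge0).
  rewrite (count_death_gt dX_refl dgmX t_ge0).
  exact: (interleaved t t_ge0).1.
- move=> t t_ge0; have te_ge0 : 0 <= t + e by rewrite addr_ge0.
  rewrite (count_death_gt dX_refl dgmX te_ge0).
  rewrite (count_death_gt dY_refl dgmY t_ge0).
  exact: (interleaved t t_ge0).2.
Qed.
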